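(* (i) The adjoint $(N\Phi)^\star:X^\star\to X^\star$ is given by $$(N\Phi)^\star q=\alpha^{-1/\gamma}\Big(\int_Df(\theta)^{1/\gamma}\eta(\theta)^{1-\frac1\gamma}b_0^\star(\theta)^{-1/\gamma}\,q(d\theta)\Big)b_0^\star\quad\text{if }X=C(D),$$ $$(N\Phi)^\star q=\alpha^{-1/\gamma}\Big(\int_Df(\theta)^{1/\gamma}\eta(\theta)^{1-\frac1\gamma}b_0^\star(\theta)^{-1/\gamma}\,q(\theta)\mu(d\theta)\Big)b_0^\star\quad\text{if }X=L^p(D,\mu).$$ (ii) With $g=(\lambda_0^\star-\rho)/\gamma$, $g$ is an eigenvalue of $B^\star$ and $b_0^\star$ is an associated eigenvector, where $B=L-N\Phi$ with $D(B)=D(L)$.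
   Context: $X$ is either $L^p(D,\mu)$, $p\in[1,\infty)$, $\mu$ $\sigma$-finite, or $C(D)$ (sup-norm) for compact metric $D$ with Borel measure $\mu$; $X^\star$ dual, $\langle\cdot,\cdot\rangle$ pairing, $X^\star_{++}$ the functionals strictly positive on nonzero nonnegative elements. $L$ is closed, densely defined, generates a $C_0$-semigroup on $X$ preserving strict positivity; $L^\star$ its adjoint. $(Nz)(\theta)=\eta(\theta)z(\theta)$; $\eta,f:D\to(0,\infty)$ measurable; $\gamma\in(0,1)\cup(1,\infty)$; $\rho>0$. Assumptions: there exist $b_0^\star\in X^\star_{++}\cap D(L^\star)$, $\lambda_0^\star\in\mathbb R$ with $L^\star b_0^\star=\lambda_0^\star b_0^\star$; $\rho>\lambda_0^\star(1-\gamma)$; if $\gamma>1$, $(b_0^\star)^{1-\gamma}/f\in L^\infty$; if $X=C(D)$, $b_0^\star$ is a measure absolutely continuous w.r.t. $\mu$ with density denoted $b_0^\star$ and $b_0^\star,\eta,f\in C(D;(0,\infty))$; if $X=L^p$, $\eta,f\in L^\infty(D;(0,\infty))$, $\int_Df^{1/\gamma}(\eta b_0^\star)^{\frac{\gamma-1}{\gamma}}d\mu<\infty$ and $\int_D(f/(\eta b_0^\star))^{p/\gamma}d\mu<\infty$. $\alpha=\gamma^\gamma\big(\int_Df^{1/\gamma}(\eta b_0^\star)^{\frac{\gamma-1}{\gamma}}d\mu/(\rho-\lambda_0^\star(1-\gamma))\big)^\gamma$. $\Phi:X\to X$ is $[\Phi x](\theta)=\big(\frac{f(\theta)}{\alpha\eta(\theta)b_0^\star(\theta)}\big)^{1/\gamma}\langle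 x,b_0^\star\rangle$. *)

From HB Require Import structures.
From mathcomp Require Import all_boot all_order all_algebra.
From mathcomp Require Import all_classical all_reals all_analysis.
Set Implicit Arguments. Unset Strict Implicit. Unset Printing Implicit Defensive.
Import Order.TTheory GRing.Theory Num.Theory.
Import numFieldNormedType.Exports.
Local Open Scope classical_set_scope.
Local Open Scope ring_scope.

(* Abstract framework for a (possibly unbounded) operator on a space X of     *)
(* real functions on a set T.  X is given by a membership predicate [inX],    *)
(* its (semi)norm [nrm] (elements with [nrm (x - y) = 0] are identified, as   *)
(* in L^p), and its positive cone [nonneg].  An operator is a map             *)
(* [L : (T -> R) -> (T -> R)] together with its domain [dom].                 *)

Section Framework.
Context {R : realType} {T : Type}.
Variables (inX : (T -> R) -> Prop) (nrm : (T -> R) -> R)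
  (nonneg : (T -> R) -> Prop).

Definition strictly_pos (x : T -> R) : Prop :=
  [/\ inX x, nonneg x & nrm x <> 0].

Definition closed_op (dom : (T -> R) -> Prop) (L : (T -> R) -> T -> R) : Prop :=
  forall (xs : nat -> T -> R) (x y : T -> R),
    (forall n, dom (xs n)) -> inX x -> inX y ->
    (fun n => nrm (xs n - x)) @ \oo --> 0 ->
    (fun n => nrm (L (xs n) - y)) @ \oo --> 0 ->
    dom x /\ nrm (L x - y) = 0.

Definition densely_defined (dom : (T -> R) -> Prop) : Prop :=
  (forall x, dom x -> inX x) /\
  (forall x, inX x -> forall e : R, 0 < e -> exists y, dom y /\ nrm (x - y) < e).

Definition C0_semigroup (S : R -> (T -> R) -> T -> R) : Prop :=
  [/\ (forall t x, 0 <= t -> inX x -> inX (S t x)),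
      (forall t (a : R) x y, 0 <= t -> inX x -> inX y ->
          nrm (S t (a *: x + y) - (a *: S t x + S t y)) = 0),
      (forall t, 0 <= t -> exists M : R, forall x, inX x -> nrm (S t x) <= M * nrm x),
      (forall x, inX x -> nrm (S 0 x - x) = 0) &
      (forall t s x, 0 <= t -> 0 <= s -> inX x ->
          nrm (S (t + s) x - S t (S s x)) = 0)] /\
  (forall x, inX x -> (fun t => nrm (S t x - x)) @ 0^'+ --> 0).

Definition is_generator (S : R -> (T -> R) -> T -> R)
  (dom : (T -> R) -> Prop) (L : (T -> R) -> T -> R) : Prop :=
  (forall x, dom x <-> (inX x /\ exists y, inX y /\
      (fun t => nrm (t^-1 *: (S t x - x) - y)) @ 0^'+ --> 0)) /\
  (forall x, dom x -> inX (L x) /\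
      (fun t => nrm (t^-1 *: (S t x - x) - L x)) @ 0^'+ --> 0).

Definition preserves_strict_pos (S : R -> (T -> R) -> T -> R) : Prop :=
  forall t x, 0 <= t -> strictly_pos x -> strictly_pos (S t x).

Definition standing_L (dom : (T -> R) -> Prop) (L : (T -> R) -> T -> R) : Prop :=
  [/\ closed_op dom L, densely_defined dom &
      exists S, [/\ C0_semigroup S, is_generator S dom L & preserves_strict_pos S]].

End Framework.

Section Quantities.
Context {R : realType} {d : measure_display} {T : measurableType d}.
Variable mu : {measure set T -> \bar R}.

(* pairing <x, b> = \int_D x b dmu of x with the functional of density b *)
Definition pairing (x b : T -> R) : R := Rintegral mu setT (fun t => x t * b t).

Definition LpN (p : R) (x : T -> R) : R := fine (Lnorm mu p%:E (EFin \o x)).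

Definition alpha (f eta b0 : T -> R) (gamma rho lambda0 : R) : R :=
  gamma `^ gamma *
  (Rintegral mu setT (fun t => f t `^ gamma^-1 * (eta t * b0 t) `^ ((gamma - 1) / gamma))
     / (rho - lambda0 * (1 - gamma))) `^ gamma.

Definition Phi (f eta b0 : T -> R) (gamma rho lambda0 : R) (x : T -> R) : T -> R :=
  fun t => (f t / (alpha f eta b0 gamma rho lambda0 * eta t * b0 t)) `^ gamma^-1
           * pairing x b0.

Definition Nmul (eta : T -> R) (z : T -> R) : T -> R := fun t => eta t * z t.

End Quantities.

Definition borelType (K : ptopologicalType) := g_sigma_algebraType (@open K).

Definition Cnorm {R : realType} {K : Type} (x : K -> R) : R :=
  sup [set `|x t| | t in [set: K]].

(* Off the null set where b0 vanishes, N Phi is the rank-one operator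
     (N Phi x)(t) = alpha^(-1/gamma) <x, b0> k(t),
     k = f^(1/gamma) eta^(1-1/gamma) b0^(-1/gamma),
   so <N Phi x, q> = alpha^(-1/gamma) <k, q> <x, b0>: this is (i).  Moreover
   k b0 = f^(1/gamma) (eta b0)^((gamma-1)/gamma) is the integrand defining alpha,
   and alpha is normalised exactly so that alpha^(-1/gamma) * \int k b0 equals
   (rho - lambda0 (1 - gamma)) / gamma.  Subtracting this multiple of <x, b0>
   from <L x, b0> = lambda0 <x, b0> leaves ((lambda0 - rho) / gamma) <x, b0>,
   which is (ii).  In L^p, b0 > 0 a.e. because the functional is positive on
   indicators of sets of finite measure, and Hoelder's inequality makes the
   pairings integrable; in C(D) compactness does both jobs. *)

From HB Require Import structures.
From mathcomp Require Import all_boot all_order all_algebra.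
From mathcomp Require Import all_classical all_reals all_analysis.
From mathcomp Require Import measurable_realfun ess_sup_inf ring.
Import Order.TTheory GRing.Theory Num.Theory.
Import numFieldNormedType.Exports.
Local Open Scope classical_set_scope.
Local Open Scope ring_scope.

Section powR_identities.
Context {R : realType}.
Implicit Types a e f b r s : R.

Lemma powR_expR x r : 0 < x -> x `^ r = expR (r * ln x).
Proof. by move=> x0; rewrite /powR gt_eqF. Qed.

Lemma mulr_powR_div_scale a e f b s : 0 < a -> 0 < e -> 0 < f -> 0 < b ->
  e * (f / (a * e * b)) `^ s = a `^ (- s) * (e * (f / (e * b)) `^ s).
Proof.
move=> a0 e0 f0 b0.
have -> : f / (a * e * b) = (f / (e * b)) / a by field; rewrite !gt_eqF.
rewrite !powR_expR ?divr_gt0 ?mulr_gt0 // ln_div ?posrE ?divr_gt0 ?mulr_gt0 //.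
by rewrite mulrCA -expRD; congr (_ * expR _); ring.
Qed.

Lemma mulr_powR_div e f b s : 0 < e -> 0 < f -> 0 < b ->
  e * (f / (e * b)) `^ s = f `^ s * e `^ (1 - s) * b `^ (- s).
Proof.
move=> e0 f0 b0.
rewrite !powR_expR ?divr_gt0 ?mulr_gt0 // ln_div ?posrE ?mulr_gt0 // lnM ?posrE //.
rewrite -{1}(lnK e0) -!expRD.
by congr expR; ring.
Qed.

Lemma powR_alpha_scale (g I c : R) : 0 < g -> 0 < I -> 0 < c ->
  (g `^ g * (I / c) `^ g) `^ (- g^-1) * I = c / g.
Proof.
move=> g0 I0 c0.
rewrite powR_expR ?mulr_gt0 ?powR_gt0 ?divr_gt0 //.
rewrite lnM ?posrE ?powR_gt0 ?divr_gt0 // !ln_powR ln_div ?posrE //.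
have -> : c / g = expR (ln c - ln g) by rewrite expRD expRN !lnK.
rewrite -{2}(lnK I0) -expRD; congr expR; field; exact: lt0r_neq0.
Qed.

End powR_identities.

Section Rintegral_extra.
Context {d : measure_display} {T : measurableType d} {R : realType}.
Variable mu : {measure set T -> \bar R}.
Implicit Types (D : set T) (h : T -> R).

Lemma Rintegral_nonintegrable D h : measurable D -> measurable_fun D h ->
  ~ mu.-integrable D (EFin \o h) -> Rintegral mu D h = 0.
Proof.
move=> mD mh hNint.
have mh' : measurable_fun D (fun x => (h x)%:E) by exact/measurable_EFinP.
have : (\int[mu]_(x in D) ((EFin \o h)^\+ x + (EFin \o h)^\- x) = +oo)%E.
  under eq_integral => x _ do rewrite -(congr1 (fun F => F x) (fune_abse _)).
  apply/eqP; rewrite eq_le leey /= leNgt; apply/negP => hlty.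
  by apply: hNint; apply/integrableP.
rewrite ge0_integralD //; last 2 first.
- exact: measurable_funepos.
- exact: measurable_funeneg.
move=> hposneg; rewrite /Rintegral integralE; move: hposneg.
have := integral_ge0 mu (fun x (_ : D x) => funepos_ge0 (EFin \o h) x).
have := integral_ge0 mu (fun x (_ : D x) => funeneg_ge0 (EFin \o h) x).
by case: (\int[mu]_(x in D) (EFin \o h)^\+%E x)%E => [?| |];
  case: (\int[mu]_(x in D) (EFin \o h)^\-%E x)%E.
Qed.

Lemma RintegralZl_measurable D h c : measurable D -> measurable_fun D h ->
  Rintegral mu D (fun t => c * h t) = c * Rintegral mu D h.
Proof.
move=> mD mh.
have [hint|hNint] := pselect (mu.-integrable D (EFin \o h)).
  by rewrite RintegralZl.
have [->|c0] := eqVneq c 0.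
  by under eq_Rintegral do rewrite mul0r; rewrite mul0r /Rintegral integral0.
rewrite !Rintegral_nonintegrable ?mulr0 //; first exact: measurable_funM.
move=> /(integrableZl mD c^-1) chint; apply: hNint.
by apply: eq_integrable chint => // x _ /=; rewrite -EFinM mulrA mulVf ?mul1r.
Qed.

Lemma ae_eq_Rintegral D h1 h2 : measurable D ->
  measurable_fun D h1 -> measurable_fun D h2 ->
  {ae mu, forall x, D x -> h1 x = h2 x} -> Rintegral mu D h1 = Rintegral mu D h2.
Proof.
move=> mD mh1 mh2 h12; rewrite /Rintegral; congr fine.
apply: ae_eq_integral => //; try exact/measurable_EFinP.
by apply: filterS h12 => x h12x Dx; rewrite h12x.
Qed.

Lemma Rintegral_le0 h : measurable_fun setT h -> (forall t, h t <= 0) ->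
  Rintegral mu setT h <= 0.
Proof.
move=> mh h_le0; rewrite -oppr_ge0 -mulN1r -RintegralZl_measurable //.
by apply: Rintegral_ge0 => t _; rewrite mulN1r oppr_ge0.
Qed.

Lemma Rintegral_gt0 h : (0 < mu setT)%E -> mu.-integrable setT (EFin \o h) ->
  (forall t, 0 <= h t) -> {ae mu, forall t, 0 < h t} -> 0 < Rintegral mu setT h.
Proof.
move=> mu_gt0 hint h_ge0 h_gt0.
rewrite lt_neqAle Rintegral_ge0 // andbT; apply/eqP => /esym hI0.
have mh : measurable_fun setT (EFin \o h) := measurable_int mu hint.
have : (\int[mu]_x `|(EFin \o h) x| = 0)%E.
  rewrite (_ : (fun x => `|(EFin \o h) x|)%E = EFin \o h); last first.
    by apply/funext => t /=; rewrite ger0_norm.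
  by rewrite -[LHS]fineK ?(integrable_fin_num measurableT hint) // -/(Rintegral _ _ _) hI0.
move/(ae_eq_integral_abs mu measurableT mh) => h_ae0.
have [N [mN muN0 sub]] : {ae mu, forall t, False}.
  apply: filterS2 h_ae0 h_gt0 => t /(_ Logic.I) /= [ht0].
  by rewrite ht0 ltxx.
have : (mu setT <= mu N)%E by rewrite le_measure ?inE // => t _; exact: sub.
by rewrite muN0 leNgt mu_gt0.
Qed.

Lemma measureT_lty_integrable_lbound h (m : R) : 0 < m -> (forall t, m <= h t) ->
  mu.-integrable setT (EFin \o h) -> (mu setT < +oo)%E.
Proof.
move=> m_gt0 m_le_h /integrableP[mh hfin].
have mh_le : (m%:E * mu setT <= \int[mu]_x `|(EFin \o h) x|)%E.
  rewrite -integral_cst // ge0_le_integral //.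
  - by move=> t _; rewrite lee_fin ltW.
  - exact: measurableT_comp.
  - by move=> t _ /=; rewrite lee_fin (le_trans (m_le_h t)) // ler_norm.
have := le_lt_trans mh_le hfin; rewrite !ltNge !leye_eq; apply: contraNN => /eqP ->.
by rewrite mulry gtr0_sg // mul1e.
Qed.

Lemma sigma_finite_measure0 (N : set T) : sigma_finite setT mu -> measurable N ->
  (forall A, measurable A -> (mu A < +oo)%E -> mu (N `&` A) = 0) -> mu N = 0.
Proof.
move=> [F FU mF] mN NA0; apply/negligibleP => //.
rewrite -(setIT N) FU setI_bigcupr; apply: negligible_bigcup => k.
have [mFk Fk_fin] := mF k.
by apply/negligibleP; [exact: measurableI | exact: NA0].
Qed.

Lemma sigma_finite_exists_pos_fin : sigma_finite setT mu -> (0 < mu setT)%E ->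
  exists A, [/\ measurable A, (0 < mu A)%E & (mu A < +oo)%E].
Proof.
move=> sf mu_gt0; apply: contrapT => noA.
move: mu_gt0; rewrite (sigma_finite_measure0 _ sf measurableT) ?ltxx // => A mA A_fin.
apply/eqP; rewrite setTI eq_le measure_ge0 andbT leNgt; apply/negP => A_gt0.
by apply: noA; exists A.
Qed.

End Rintegral_extra.

Section Lfun_extra.
Context {d : measure_display} {T : measurableType d} {R : realType}.
Variable mu : {measure set T -> \bar R}.
Implicit Types (p : \bar R) (f g : T -> R).

Lemma Lfun_measurable p f : f \in Lfun mu p -> measurable_fun setT f.
Proof. by case/andP; rewrite inE. Qed.

Lemma Lfun_Lnorm_lty p f : f \in Lfun mu p -> ('N[mu]_p[EFin \o f] < +oo)%E.
Proof. by case/andP => _; rewrite inE. Qed.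

Lemma mem_Lfun p f : measurable_fun setT f -> ('N[mu]_p[EFin \o f] < +oo)%E ->
  f \in Lfun mu p.
Proof. by move=> mf fin; rewrite inE; apply/andP; split; rewrite inE. Qed.

Lemma Lfuny_ae_bounded g : (0 < mu setT)%E -> g \in Lfun mu +oo%E ->
  exists M : R, {ae mu, forall t, `|g t| <= M}.
Proof.
move=> mu_gt0 /Lfun_Lnorm_lty; rewrite unlock mu_gt0.
have := ess_sup_ge mu (abse \o (EFin \o g)).
case: (ess_sup mu (abse \o (EFin \o g))) => [r| |] gle //= _.
- by exists r; apply: filterS gle => t /=; rewrite lee_fin.
- by exists 0; apply: filterS gle => t /=; rewrite leeNy_eq.
Qed.

Lemma Lfun1_Lfuny_integrable f g : (0 < mu setT)%E ->
  f \in Lfun mu 1 -> g \in Lfun mu +oo%E ->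
  mu.-integrable setT (EFin \o (fun t => f t * g t)).
Proof.
move=> mu_gt0 /Lfun1_integrable fint lg; have [M gM] := Lfuny_ae_bounded _ mu_gt0 lg.
have mf := measurable_int mu fint.
have mfg : measurable_fun setT (fun t => f t * g t).
  by apply: measurable_funM; [exact/measurable_EFinP | exact: Lfun_measurable _ _ lg].
apply/integrableP; split; first exact/measurable_EFinP.
apply: (@le_lt_trans _ _ (\int[mu]_x ((`|M|)%:E * `|(EFin \o f) x|))%E).
  apply: ae_ge0_le_integral => //.
  - by apply: measurableT_comp => //; exact/measurable_EFinP.
  - by apply: measurable_funeM; exact: measurableT_comp.
  apply: filterS gM => t gtM _ /=.
  rewrite -EFinM lee_fin normrM mulrC ler_wpM2r //.
  exact: le_trans gtM (ler_norm _).
rewrite ge0_integralZl_EFin //; last exact: measurableT_comp.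
by rewrite lte_mul_pinfty //; case/integrableP: fint.
Qed.

Lemma Lfun_hoelder_integrable (p : R) f g : 1 <= p -> (0 < mu setT)%E ->
  f \in Lfun mu p%:E -> g \in Lfun mu (hoelder_conjugate p%:E) ->
  mu.-integrable setT (EFin \o (fun t => f t * g t)).
Proof.
move=> p_ge1 mu_gt0 lf lg.
have [p1|p_neq1] := eqVneq p 1.
  by move: lf lg; rewrite p1 hoelder_conjugate1; exact: Lfun1_Lfuny_integrable.
have p_gt1 : 1 < p by rewrite lt_neqAle eq_sym p_neq1 p_ge1.
have p_gt0 : 0 < p by exact: lt_trans ltr01 p_gt1.
have p1_gt0 : 0 < p - 1 by rewrite subr_gt0.
have pE : hoelder_conjugate p%:E = (p / (p - 1))%:E.
  rewrite /hoelder_conjugate /= eqe (gt_eqF p_gt0) /=.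
  by rewrite -EFinB inver (gt_eqF p1_gt0) -EFinM.
move: lg; rewrite pE => lg.
apply/Lfun1_integrable/mem_Lfun; first exact: measurable_funM (Lfun_measurable _ _ lf) (Lfun_measurable _ _ lg).
apply: le_lt_trans.
  apply: (@hoelder _ _ _ mu f g p (p / (p - 1))); rewrite ?divr_gt0 //.
  - exact: Lfun_measurable _ _ lf.
  - exact: Lfun_measurable _ _ lg.
  by rewrite invf_div; field; rewrite ?(gt_eqF p_gt0) ?(gt_eqF p1_gt0).
rewrite lte_mul_pinfty ?Lnorm_ge0 ?(Lfun_Lnorm_lty _ _ lg) //.
by rewrite ge0_fin_numE ?Lnorm_ge0 // (Lfun_Lnorm_lty _ _ lf).
Qed.

Lemma Lnorm_indic (p : R) (A : set T) : 0 < p -> measurable A ->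
  ('N[mu]_p%:E[EFin \o \1_A] = mu A `^ p^-1)%E.
Proof.
move=> p_gt0 mA; rewrite unlock.
rewrite (_ : (fun x => `|(EFin \o \1_A) x| `^ p)%E = (fun x => (\1_A x)%:E)).
  by rewrite integral_indic // setIT.
apply/funext => x /=; rewrite /indic; case: (x \in A) => /=.
  by rewrite normr1 powR1.
by rewrite normr0 powR0 // gt_eqF.
Qed.

Lemma Lfun_indic (p : R) (A : set T) : 0 < p -> measurable A -> (mu A < +oo)%E ->
  (\1_A : T -> R) \in Lfun mu p%:E.
Proof.
move=> p_gt0 mA muA_fin; apply: mem_Lfun; first exact/measurable_indicP.
by rewrite Lnorm_indic // poweR_lty.
Qed.

Lemma LpN_indic_neq0 (p : R) (A : set T) : 0 < p -> measurable A ->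
  (0 < mu A)%E -> (mu A < +oo)%E -> LpN mu p (\1_A) <> 0.
Proof.
move=> p_gt0 mA muA_gt0 muA_fin; rewrite /LpN Lnorm_indic //.
rewrite -(fineK (_ : mu A \is a fin_num)) ?ge0_fin_numE // poweR_EFin /=.
by apply/eqP; rewrite gt_eqF // powR_gt0 // fine_gt0 // muA_gt0.
Qed.

Lemma Lfun_ae_dominated (p C : R) (h v : T -> R) :
  0 < p -> 0 <= C -> measurable_fun setT h -> measurable_fun setT v ->
  (forall t, 0 <= v t) -> (\int[mu]_t (v t)%:E < +oo)%E ->
  {ae mu, forall t, `|h t| `^ p <= C * v t} -> h \in Lfun mu p%:E.
Proof.
move=> p_gt0 C_ge0 mh mv v_ge0 v_fin hv; apply: mem_Lfun => //.
rewrite unlock; apply: poweR_lty.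
apply: (@le_lt_trans _ _ (\int[mu]_t (C%:E * (v t)%:E))%E).
  apply: ae_ge0_le_integral => //.
  - by move=> t _; exact: poweR_ge0.
  - apply: (measurableT_comp (measurable_poweR _)).
    by apply: measurableT_comp => //; exact/measurable_EFinP.
  - by move=> t _; rewrite -EFinM lee_fin mulr_ge0.
  - by apply: measurable_funeM; exact/measurable_EFinP.
  apply: filterS hv => t hvt _.
  by rewrite /comp abse_EFin poweR_EFin -EFinM lee_fin.
rewrite ge0_integralZl_EFin ?lte_mul_pinfty //; last exact/measurable_EFinP.
by move=> t _; rewrite lee_fin.
Qed.

End Lfun_extra.

Lemma measurable_inv {R : realType} : measurable_fun setT (@GRing.inv R).
Proof.
have -> : [set: R] = [set x | x != 0] `|` [set 0].
  by apply/seteqP; split => x // _; have [->|x0] := eqVneq x 0; [right|left].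
apply/measurable_funU => //; first exact: open_measurable (@open_neq _ 0).
split; last exact: measurable_fun_set1.
apply: open_continuous_measurable_fun; first exact: open_neq.
by move=> x; rewrite inE /= => x0; exact: inv_continuous.
Qed.

Lemma standing_L_dom {R : realType} {T : Type} {inX : (T -> R) -> Prop} {nrm nonneg}
    {domL} {L : (T -> R) -> T -> R} {x} :
  standing_L inX nrm nonneg domL L -> domL x -> inX x /\ inX (L x).
Proof. by case=> _ [domX _] [S [_ [_ LX] _]] domLx; split; [exact: domX | case: (LX x)]. Qed.

(** * The operator N Phi *)

Section adjoint_quantities.
Context {R : realType} {T : Type}.
Variables (f eta b0 : T -> R) (gamma : R).

Definition adjoint_kernel (t : T) : R :=
  f t `^ gamma^-1 * eta t `^ (1 - gamma^-1) * b0 t `^ (- gamma^-1).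

Definition alpha_integrand (t : T) : R :=
  f t `^ gamma^-1 * (eta t * b0 t) `^ ((gamma - 1) / gamma).

Lemma alpha_integrand_ge0 t : 0 <= alpha_integrand t.
Proof. by rewrite mulr_ge0 ?powR_ge0. Qed.

Hypotheses (gamma_gt0 : 0 < gamma)
  (eta_gt0 : forall t, 0 < eta t) (f_gt0 : forall t, 0 < f t).

Lemma alpha_integrand_gt0 t : 0 < b0 t -> 0 < alpha_integrand t.
Proof. by move=> b0t; rewrite mulr_gt0 ?powR_gt0 ?mulr_gt0. Qed.

Lemma adjoint_kernel_mul_b0 t : 0 < b0 t -> adjoint_kernel t * b0 t = alpha_integrand t.
Proof.
move=> b0t; have ebt := mulr_gt0 (eta_gt0 t) b0t.
rewrite /adjoint_kernel /alpha_integrand !powR_expR ?f_gt0 ?eta_gt0 //.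
rewrite lnM ?posrE ?eta_gt0 // -{2}(lnK b0t) -!expRD.
by congr expR; field; exact: lt0r_neq0.
Qed.

End adjoint_quantities.

Section NPhi_pointwise.
Context {R : realType} {d : measure_display} {T : measurableType d}.
Variables (mu : {measure set T -> \bar R}) (f eta b0 : T -> R) (gamma rho lambda0 : R).
Local Notation a := (alpha mu f eta b0 gamma rho lambda0).
Local Notation NPhi x := (Nmul eta (Phi mu f eta b0 gamma rho lambda0 x)).
Hypotheses (a_gt0 : 0 < a)
  (eta_gt0 : forall t, 0 < eta t) (f_gt0 : forall t, 0 < f t).

Lemma Nmul_Phi_rescale x t : 0 < b0 t ->
  NPhi x t = a `^ (- gamma^-1) * pairing mu x b0 * (eta t * (f t / (eta t * b0 t)) `^ gamma^-1).
Proof.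
move=> b0t; rewrite /Nmul /Phi mulrA mulr_powR_div_scale //.
by rewrite mulrAC.
Qed.

Lemma Nmul_PhiE x t : 0 < b0 t ->
  NPhi x t = a `^ (- gamma^-1) * pairing mu x b0 * adjoint_kernel f eta b0 gamma t.
Proof. by move=> b0t; rewrite Nmul_Phi_rescale // mulr_powR_div. Qed.

End NPhi_pointwise.

Section NPhi_pairing.
Context {R : realType} {d : measure_display} {T : measurableType d}.
Variables (mu : {measure set T -> \bar R}) (f eta b0 : T -> R) (gamma rho lambda0 : R).
Local Notation a := (alpha mu f eta b0 gamma rho lambda0).
Local Notation NPhi x := (Nmul eta (Phi mu f eta b0 gamma rho lambda0 x)).
Local Notation k := (adjoint_kernel f eta b0 gamma).
Local Notation I := (Rintegral mu setT (alpha_integrand f eta b0 gamma)).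
Hypotheses (gamma_gt0 : 0 < gamma) (rho_gt : lambda0 * (1 - gamma) < rho)
  (eta_gt0 : forall t, 0 < eta t) (f_gt0 : forall t, 0 < f t)
  (mf : measurable_fun setT f) (meta : measurable_fun setT eta)
  (mb0 : measurable_fun setT b0) (b0_gt0 : {ae mu, forall t, 0 < b0 t})
  (mu_gt0 : (0 < mu setT)%E)
  (alpha_int : mu.-integrable setT (EFin \o alpha_integrand f eta b0 gamma)).

Lemma alpha_integral_gt0 : 0 < I.
Proof.
apply: Rintegral_gt0 => //; first exact: alpha_integrand_ge0.
by apply: filterS b0_gt0 => t; exact: alpha_integrand_gt0.
Qed.

Lemma alpha_gt0 : 0 < a.
Proof.
by rewrite /alpha mulr_gt0 ?powR_gt0 ?divr_gt0 ?subr_gt0 ?alpha_integral_gt0.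
Qed.

Lemma alpha_powR_integral : a `^ (- gamma^-1) * I = (rho - lambda0 * (1 - gamma)) / gamma.
Proof. by rewrite powR_alpha_scale ?subr_gt0 ?alpha_integral_gt0. Qed.

Lemma measurable_adjoint_kernel : measurable_fun setT k.
Proof.
by apply: measurable_funM; first apply: measurable_funM;
  apply: (measurableT_comp (measurable_powR _)).
Qed.

Lemma measurable_NPhi x : measurable_fun setT (NPhi x).
Proof.
apply: measurable_funM => //; apply: measurable_funM => //.
apply: (measurableT_comp (measurable_powR _)); apply: measurable_funM => //.
apply: (measurableT_comp measurable_inv).
by apply: measurable_funM => //; apply: measurable_funM.
Qed.

Lemma pairing_NPhi x q : measurable_fun setT q ->
  pairing mu (NPhi x) q =
  a `^ (- gamma^-1) * Rintegral mu setT (fun t => k t * q t) * pairing mu x b0.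
Proof.
move=> mq; rewrite [RHS]mulrAC -RintegralZl_measurable //; last first.
  by apply: measurable_funM => //; exact: measurable_adjoint_kernel.
apply: ae_eq_Rintegral => //.
- by apply: measurable_funM => //; exact: measurable_NPhi.
- apply: measurable_funM => //.
  by apply: measurable_funM => //; exact: measurable_adjoint_kernel.
apply: filterS b0_gt0 => t b0t _.
by rewrite Nmul_PhiE ?alpha_gt0 // mulrA.
Qed.

Lemma pairing_NPhi_b0 x :
  pairing mu (NPhi x) b0 = (rho - lambda0 * (1 - gamma)) / gamma * pairing mu x b0.
Proof.
rewrite pairing_NPhi // -alpha_powR_integral; congr (_ * _ * _).
apply: ae_eq_Rintegral => //.
- by apply: measurable_funM => //; exact: measurable_adjoint_kernel.
- by apply/measurable_EFinP; exact: measurable_int alpha_int.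
apply: filterS b0_gt0 => t b0t _.
exact: adjoint_kernel_mul_b0.
Qed.

Lemma pairing_sub_NPhi_b0 y x :
  mu.-integrable setT (EFin \o (fun t => y t * b0 t)) ->
  mu.-integrable setT (EFin \o (fun t => NPhi x t * b0 t)) ->
  pairing mu y b0 = lambda0 * pairing mu x b0 ->
  pairing mu (y - NPhi x) b0 = (lambda0 - rho) / gamma * pairing mu x b0.
Proof.
move=> y_int NPhi_int yb0.
have -> : pairing mu (y - NPhi x) b0 =
    Rintegral mu setT (fun t => y t * b0 t - NPhi x t * b0 t).
  by apply: eq_Rintegral => t _; rewrite !fctE mulrBl.
rewrite RintegralB // -!/(pairing _ _ _) yb0 pairing_NPhi_b0.
by field; exact: lt0r_neq0.
Qed.

End NPhi_pairing.

(** * The case X = L^p *)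

Lemma strictly_pos_pairing_ae_gt0 {d : measure_display} {T : measurableType d}
    {R : realType} (mu : {measure set T -> \bar R}) (p : R) (b0 : T -> R) :
  0 < p -> sigma_finite setT mu -> measurable_fun setT b0 ->
  (forall x, strictly_pos (fun x => x \in Lfun mu p%:E) (LpN mu p)
     (fun x => {ae mu, forall t, 0 <= x t}) x -> 0 < pairing mu x b0) ->
  {ae mu, forall t, 0 < b0 t}.
Proof.
move=> p_gt0 sf mb0 b0_pos; pose N := [set t | b0 t <= 0].
have mN : measurable N.
  have := mb0 measurableT _ (measurable_itv `]-oo, 0]).
  by rewrite setTI; congr measurable; apply/seteqP; split => t /=; rewrite in_itv.
exists N; split => //; last by move=> t /= /negP; rewrite /N /= leNgt.
apply: (sigma_finite_measure0 _ _ sf mN) => A mA muA_fin.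
have mNA : measurable (N `&` A) by exact: measurableI.
apply/eqP; rewrite eq_le measure_ge0 andbT leNgt; apply/negP => muNA_gt0.
have : 0 < pairing mu \1_(N `&` A) b0.
  apply: b0_pos; split.
  - by apply: Lfun_indic => //; apply: le_lt_trans muA_fin; rewrite le_measure ?inE.
  - by apply: aeW => t; rewrite /indic; case: (_ \in _).
  - by apply: LpN_indic_neq0 => //; apply: le_lt_trans muA_fin; rewrite le_measure ?inE.
apply/negP; rewrite -leNgt; apply: Rintegral_le0.
  by apply: measurable_funM => //; exact/measurable_indicP.
move=> t; rewrite /indic; have [/set_mem [Nt _]|_] := boolP (t \in N `&` A).
  by rewrite mul1r.
by rewrite mul0r.
Qed.

Section Lp_case.
Context {R : realType} {d : measure_display} {D : measurableType d}.
Variables (mu : {measure set D -> \bar R}) (p gamma rho lambda0 : R) (eta f b0 : D -> R)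
  (domL : (D -> R) -> Prop) (L : (D -> R) -> D -> R).
Local Notation inX := (fun x : D -> R => x \in Lfun mu p%:E).
Local Notation nonneg := (fun x : D -> R => {ae mu, forall t, 0 <= x t}).
Local Notation a := (alpha mu f eta b0 gamma rho lambda0).
Local Notation NPhi x := (Nmul eta (Phi mu f eta b0 gamma rho lambda0 x)).
Hypotheses (sf : sigma_finite setT mu) (mu_gt0 : (0 < mu setT)%E) (p_ge1 : 1 <= p)
  (HL : standing_L inX (LpN mu p) nonneg domL L) (gamma_gt0 : 0 < gamma)
  (b0_dual : b0 \in Lfun mu (hoelder_conjugate p%:E))
  (b0_pos : forall x, strictly_pos inX (LpN mu p) nonneg x -> 0 < pairing mu x b0)
  (Lb0 : forall x, domL x -> pairing mu (L x) b0 = lambda0 * pairing mu x b0)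
  (rho_gt : lambda0 * (1 - gamma) < rho)
  (eta_gt0 : forall t, 0 < eta t) (f_gt0 : forall t, 0 < f t)
  (eta_bd : eta \in Lfun mu +oo%E) (f_bd : f \in Lfun mu +oo%E)
  (alpha_fin : (\int[mu]_t (alpha_integrand f eta b0 gamma t)%:E < +oo)%E)
  (NPhi_fin : (\int[mu]_t ((f t / (eta t * b0 t)) `^ (p / gamma))%:E < +oo)%E).

Let p_gt0 : 0 < p. Proof. exact: lt_le_trans ltr01 p_ge1. Qed.
Let mb0 : measurable_fun setT b0. Proof. exact: Lfun_measurable _ _ _ b0_dual. Qed.
Let meta : measurable_fun setT eta. Proof. exact: Lfun_measurable _ _ _ eta_bd. Qed.
Let mf : measurable_fun setT f. Proof. exact: Lfun_measurable _ _ _ f_bd. Qed.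

Let b0_gt0 : {ae mu, forall t, 0 < b0 t}.
Proof. exact: strictly_pos_pairing_ae_gt0 p_gt0 sf mb0 b0_pos. Qed.

Let alpha_int : mu.-integrable setT (EFin \o alpha_integrand f eta b0 gamma).
Proof.
apply/integrableP; split.
  apply/measurable_EFinP; apply: measurable_funM.
    exact: measurableT_comp (measurable_powR _) mf.
  by apply: measurableT_comp (measurable_powR _) _; exact: measurable_funM.
by under eq_integral => t _ do rewrite /= ger0_norm ?alpha_integrand_ge0 //.
Qed.

Lemma Lfun_NPhi x : NPhi x \in Lfun mu p%:E.
Proof.
have [M etaM] := Lfuny_ae_bounded _ _ mu_gt0 eta_bd.
set K := a `^ (- gamma^-1) * pairing mu x b0.
apply: (@Lfun_ae_dominated _ _ _ _ _ ((`|K| * `|M|) `^ p) _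
  (fun t => (f t / (eta t * b0 t)) `^ (p / gamma))) => //.
- exact: measurable_NPhi.
- apply: measurableT_comp (measurable_powR _) _; apply: measurable_funM => //.
  by apply: measurableT_comp measurable_inv _; exact: measurable_funM.
- by move=> t; exact: powR_ge0.
apply: filterS2 etaM b0_gt0 => t etatM b0t.
rewrite Nmul_Phi_rescale ?alpha_gt0 // -/K (mulrC p) powRrM -powRM ?mulr_ge0 ?powR_ge0 //.
apply: ge0_ler_powR; rewrite ?nnegrE ?mulr_ge0 ?powR_ge0 //; first exact: ltW.
rewrite normrM (normrM (eta t)) (ger0_norm (powR_ge0 _ _)) mulrA.
apply: ler_wpM2r; first exact: powR_ge0.
by apply: ler_wpM2l => //; exact: le_trans etatM (ler_norm M).
Qed.

Lemma Lp_NPhi_adjoint :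
  (forall x, inX x -> inX (NPhi x)) /\
  (forall q, q \in Lfun mu (hoelder_conjugate p%:E) -> forall x, inX x ->
     pairing mu (NPhi x) q =
     (a `^ (- gamma^-1) *
      Rintegral mu setT (fun t => f t `^ gamma^-1 * eta t `^ (1 - gamma^-1)
                                   * b0 t `^ (- gamma^-1) * q t))
     * pairing mu x b0).
Proof.
split=> [x _|q /Lfun_measurable mq x _]; first exact: Lfun_NPhi.
exact: pairing_NPhi.
Qed.

Lemma Lp_NPhi_eigen :
  (forall x, domL x ->
     pairing mu (L x - NPhi x) b0 = (lambda0 - rho) / gamma * pairing mu x b0) /\
  (exists x, inX x /\ pairing mu x b0 <> 0).
Proof.
split=> [x domLx|].
  have [_ XLx] := standing_L_dom HL domLx.
  apply: pairing_sub_NPhi_b0 => //; last exact: Lb0.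
  - exact: Lfun_hoelder_integrable _ _ _ _ p_ge1 mu_gt0 XLx b0_dual.
  - exact: Lfun_hoelder_integrable _ _ _ _ p_ge1 mu_gt0 (Lfun_NPhi x) b0_dual.
have [A [mA muA_gt0 muA_fin]] := sigma_finite_exists_pos_fin _ sf mu_gt0.
have XA : inX \1_A by exact: Lfun_indic.
exists \1_A; split => //; apply/eqP; rewrite gt_eqF // b0_pos //; split => //.
- by apply: aeW => t; rewrite /indic; case: (_ \in _).
- exact: LpN_indic_neq0.
Qed.

End Lp_case.

(** * The case X = C(D) *)

Section continuous_borel.
Context {R : realType} {K : ptopologicalType}.

Lemma continuous_borel_measurable (g : K -> R) : continuous g ->
  measurable_fun (setT : set (borelType K)) g.
Proof.
move=> cg; apply: (measurability _ (RGenOpens.measurableE R)).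
move=> _ [_ [x [y ->]] <-]; rewrite setTI.
by apply: sub_sigma_algebra; move: cg => /continuousP; apply; exact: interval_open.
Qed.

Lemma continuous_powR (u : K -> R) (r : R) : continuous u -> (forall t, 0 < u t) ->
  continuous (fun t => u t `^ r).
Proof.
move=> cu u_gt0 t; rewrite (_ : (fun t => _) = fun t => expR (r * ln (u t))); last first.
  by apply/funext => s; rewrite powR_expR.
apply: continuous_comp; last exact: continuous_expR.
apply: continuousM; first exact: cst_continuous.
exact: continuous_comp (cu t) (continuous_ln (u_gt0 t)).
Qed.

Lemma compact_continuous_integrable (nu : {measure set (borelType K) -> \bar R})
    (g : K -> R) :
  compact [set: K] -> continuous g -> (nu setT < +oo)%E -> nu.-integrable setT (EFin \o g).
Proof.
move=> cK cg nu_fin.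
have cng : {within [set: K], continuous (fun t => `|g t|)}.
  by apply: continuous_subspaceT => t; exact: continuous_comp (cg t) (@norm_continuous _ _ _).
have K0 : [set: K] !=set0 by exists point.
have [c _ gc] := compact_EVT_max K0 cK cng.
apply/integrableP; split; first by apply/measurable_EFinP; exact: continuous_borel_measurable.
apply: (@le_lt_trans _ _ (\int[nu]_(x in setT) (cst `|g c|%:E) x))%E.
  apply: ge0_le_integral => //.
  - apply: measurableT_comp => //.
    by apply/measurable_EFinP; exact: continuous_borel_measurable.
  - by move=> t _ /=; rewrite lee_fin gc ?inE.
by rewrite integral_cst // lte_mul_pinfty.
Qed.

End continuous_borel.

Section C_case.
Context {R : realType} {D : pseudoPMetricType R}.
Variables (mu : {measure set (borelType D) -> \bar R}) (gamma rho lambda0 : R)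
  (eta f b0 : D -> R) (domL : (D -> R) -> Prop) (L : (D -> R) -> D -> R).
Local Notation inX := (fun x : D -> R => continuous x).
Local Notation a := (alpha mu f eta b0 gamma rho lambda0).
Local Notation NPhi x := (Nmul (T := borelType D) eta (Phi mu f eta b0 gamma rho lambda0 x)).
Local Notation k := (adjoint_kernel f eta b0 gamma).
Hypotheses (D_compact : compact [set: D]) (mu_gt0 : (0 < mu setT)%E)
  (HL : standing_L inX Cnorm (fun x : D -> R => forall t, 0 <= x t) domL L)
  (gamma_gt0 : 0 < gamma)
  (b0_cont : continuous b0) (b0_gt0 : forall t, 0 < b0 t)
  (b0_int : mu.-integrable setT (fun t => (b0 t)%:E))
  (Lb0 : forall x, domL x -> pairing mu (L x) b0 = lambda0 * pairing mu x b0)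
  (rho_gt : lambda0 * (1 - gamma) < rho)
  (eta_cont : continuous eta) (eta_gt0 : forall t, 0 < eta t)
  (f_cont : continuous f) (f_gt0 : forall t, 0 < f t).

Let mu_fin : (mu setT < +oo)%E.
Proof.
have D0 : [set: D] !=set0 by exists point.
have [c _ b0c] := compact_EVT_min D0 D_compact (continuous_subspaceT b0_cont).
apply: (@measureT_lty_integrable_lbound _ _ _ mu b0 (b0 c)) => // t.
by apply: b0c; rewrite inE.
Qed.

Let mb0 := continuous_borel_measurable _ b0_cont.
Let meta := continuous_borel_measurable _ eta_cont.
Let mf := continuous_borel_measurable _ f_cont.

Let k_cont : continuous k.
Proof.
move=> t; exact: continuousM (continuousM (continuous_powR _ _ f_cont f_gt0 t)
  (continuous_powR _ _ eta_cont eta_gt0 t)) (continuous_powR _ _ b0_cont b0_gt0 t).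
Qed.

Let continuous_integrable (g : D -> R) : continuous g ->
  mu.-integrable setT (EFin \o g).
Proof. by move=> cg; exact: compact_continuous_integrable. Qed.

Let alpha_int : mu.-integrable setT (EFin \o alpha_integrand f eta b0 gamma).
Proof.
have -> : alpha_integrand f eta b0 gamma = (k \* b0)%R.
  by apply/funext => t; rewrite /= adjoint_kernel_mul_b0.
by apply: continuous_integrable => t; exact: continuousM (k_cont t) (b0_cont t).
Qed.

Let b0_ae_gt0 : {ae mu, forall t, 0 < b0 t}. Proof. exact: aeW. Qed.

Let NPhiE x : NPhi x = fun t => a `^ (- gamma^-1) * pairing mu x b0 * k t.
Proof. by apply/funext => t; rewrite Nmul_PhiE ?alpha_gt0. Qed.

Let NPhi_cont x : continuous (NPhi x).
Proof. by rewrite NPhiE => t; exact: continuousM (@cst_continuous _ _ _ t) (k_cont t). Qed.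

Lemma C_NPhi_adjoint :
  (forall x, inX x -> inX (NPhi x)) /\
  (forall qp qn : {measure set (borelType D) -> \bar R},
     (qp setT < +oo)%E -> (qn setT < +oo)%E ->
     forall x, inX x ->
     Rintegral qp setT (NPhi x) - Rintegral qn setT (NPhi x) =
     (a `^ (- gamma^-1) *
      (Rintegral qp setT (fun t => f t `^ gamma^-1 * eta t `^ (1 - gamma^-1)
                                    * b0 t `^ (- gamma^-1))
       - Rintegral qn setT (fun t => f t `^ gamma^-1 * eta t `^ (1 - gamma^-1)
                                    * b0 t `^ (- gamma^-1))))
     * pairing mu x b0).
Proof.
split=> [x _|qp qn _ _ x _]; first exact: NPhi_cont.
have mk : measurable_fun (setT : set (borelType D)) k by exact: measurable_adjoint_kernel.
by rewrite NPhiE !RintegralZl_measurable //; ring.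
Qed.

Lemma C_NPhi_eigen :
  (forall x, domL x ->
     pairing mu (L x - NPhi x) b0 = (lambda0 - rho) / gamma * pairing mu x b0) /\
  (exists x, inX x /\ pairing mu x b0 <> 0).
Proof.
split=> [x domLx|].
  have [_ XLx] := standing_L_dom HL domLx.
  apply: pairing_sub_NPhi_b0 => //; last exact: Lb0.
  - by apply: continuous_integrable => t; exact: continuousM (XLx t) (b0_cont t).
  - by apply: continuous_integrable => t; exact: continuousM (NPhi_cont x t) (b0_cont t).
exists (cst 1); split; first exact: cst_continuous.
apply/eqP; rewrite gt_eqF // /pairing.
under eq_Rintegral do rewrite mul1r.
by apply: Rintegral_gt0 => // t; exact: ltW.
Qed.

End C_case.

Theorem lemma3p6 (R : realType) :
  (* ===================== Case X = L^p(D, mu), 1 <= p < oo ===================== *)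
  (forall (d : measure_display) (D : measurableType d)
     (mu : {measure set D -> \bar R}) (p gamma rho lambda0 : R)
     (eta f b0 : D -> R)
     (domL : (D -> R) -> Prop) (L : (D -> R) -> D -> R),
   let inX := fun x : D -> R => x \in Lfun mu p%:E in
   let nrm := LpN mu p in
   let nonneg := fun x : D -> R => {ae mu, forall t, 0 <= x t} in
   (* X^* is identified with L^{p'}(D, mu), p' the Hoelder conjugate of p *)
   let inXs := fun q : D -> R => q \in Lfun mu (hoelder_conjugate p%:E) in
   sigma_finite setT mu -> (0 < mu setT)%E -> 1 <= p ->
   standing_L inX nrm nonneg domL L ->
   0 < gamma -> gamma != 1 -> 0 < rho ->
   (* b0* in X^*_{++}, L^* b0* = lambda0* b0* *)
   inXs b0 ->
   (forall x, strictly_pos inX nrm nonneg x -> 0 < pairing mu x b0) ->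
   (forall x, domL x -> pairing mu (L x) b0 = lambda0 * pairing mu x b0) ->
   rho > lambda0 * (1 - gamma) ->
   (1 < gamma -> (fun t => b0 t `^ (1 - gamma) / f t) \in Lfun mu +oo%E) ->
   (forall t, 0 < eta t) -> (forall t, 0 < f t) ->
   eta \in Lfun mu +oo%E -> f \in Lfun mu +oo%E ->
   (\int[mu]_t (f t `^ gamma^-1 * (eta t * b0 t) `^ ((gamma - 1) / gamma))%:E < +oo)%E ->
   (\int[mu]_t ((f t / (eta t * b0 t)) `^ (p / gamma))%:E < +oo)%E ->
   let NPhi := fun x => Nmul eta (Phi mu f eta b0 gamma rho lambda0 x) in
   let a := alpha mu f eta b0 gamma rho lambda0 in
   (* (i) *)
   ((forall x, inX x -> inX (NPhi x)) /\
    (forall q, inXs q -> forall x, inX x ->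
       pairing mu (NPhi x) q =
       (a `^ (- gamma^-1) *
        Rintegral mu setT (fun t => f t `^ gamma^-1 * eta t `^ (1 - gamma^-1)
                                     * b0 t `^ (- gamma^-1) * q t))
       * pairing mu x b0)) /\
   (* (ii) *)
   (let g := (lambda0 - rho) / gamma in
    (forall x, domL x -> pairing mu (L x - NPhi x) b0 = g * pairing mu x b0) /\
    (exists x, inX x /\ pairing mu x b0 <> 0)))
  /\
  (* ===================== Case X = C(D), D compact metric ===================== *)
  (forall (D : pseudoPMetricType R)
     (mu : {measure set (borelType D) -> \bar R}) (gamma rho lambda0 : R)
     (eta f b0 : D -> R)
     (domL : (D -> R) -> Prop) (L : (D -> R) -> D -> R),
   let inX := fun x : D -> R => continuous x in
   let nrm := fun x : D -> R => Cnorm x in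
   let nonneg := fun x : D -> R => forall t, 0 <= x t in
   hausdorff_space D -> compact [set: D] -> (0 < mu setT)%E ->
   standing_L inX nrm nonneg domL L ->
   0 < gamma -> gamma != 1 -> 0 < rho ->
   (* b0* is the finite measure b0 dmu with continuous positive density b0 *)
   continuous b0 -> (forall t, 0 < b0 t) ->
   mu.-integrable setT (fun t => (b0 t)%:E) ->
   (forall x, strictly_pos inX nrm nonneg x -> 0 < pairing mu x b0) ->
   (forall x, domL x -> pairing mu (L x) b0 = lambda0 * pairing mu x b0) ->
   rho > lambda0 * (1 - gamma) ->
   (1 < gamma -> (fun t => b0 t `^ (1 - gamma) / f t) \in Lfun mu +oo%E) ->
   continuous eta -> (forall t, 0 < eta t) ->
   continuous f -> (forall t, 0 < f t) ->
   let NPhi := fun x => Nmul (T := borelType D) eta (Phi mu f eta b0 gamma rho lambda0 x) in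
   let a := alpha mu f eta b0 gamma rho lambda0 in
   (* (i): X^* = finite signed Borel measures q = qp - qn *)
   ((forall x, inX x -> inX (NPhi x)) /\
    (forall qp qn : {measure set (borelType D) -> \bar R},
       (qp setT < +oo)%E -> (qn setT < +oo)%E ->
       forall x, inX x ->
       Rintegral qp setT (NPhi x) - Rintegral qn setT (NPhi x) =
       (a `^ (- gamma^-1) *
        (Rintegral qp setT (fun t => f t `^ gamma^-1 * eta t `^ (1 - gamma^-1)
                                      * b0 t `^ (- gamma^-1))
         - Rintegral qn setT (fun t => f t `^ gamma^-1 * eta t `^ (1 - gamma^-1)
                                      * b0 t `^ (- gamma^-1))))
       * pairing mu x b0)) /\
   (* (ii) *)
   (let g := (lambda0 - rho) / gamma in
    (forall x, domL x -> pairing mu (L x - NPhi x) b0 = g * pairing mu x b0) /\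
    (exists x, inX x /\ pairing mu x b0 <> 0))).
Proof.
(* The discarded hypotheses (gamma != 1, rho > 0, the bound on b0^(1-gamma)/f and,
   for C(D), Hausdorffness and the positivity of <., b0>) serve the control
   problem of the paper; these identities do not need them. *)
split.
- move=> d D mu p gamma rho lambda0 eta f b0 domL L inX nrm nonneg inXs sf mu_gt0 p_ge1
    HL gamma_gt0 _ _ b0_dual b0_pos Lb0 rho_gt _ eta_gt0 f_gt0 eta_bd f_bd alpha_fin
    NPhi_fin NPhi a.
  by split; [exact: Lp_NPhi_adjoint | exact: Lp_NPhi_eigen].
- move=> D mu gamma rho lambda0 eta f b0 domL L inX nrm nonneg _ D_compact mu_gt0 HL
    gamma_gt0 _ _ b0_cont b0_gt0 b0_int _ Lb0 rho_gt _ eta_cont eta_gt0 f_cont f_gt0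
    NPhi a.
  by split; [exact: C_NPhi_adjoint | exact: C_NPhi_eigen].
Qed.
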